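(* Let $A\subseteq B\subseteq C$ be convex sets in $\mathbb{R}^d$. Then: (i) $\operatorname{rdist}(A,B)=\inf\{\lambda\geq 0: B\subseteq(1+\lambda)A-\lambda A\}$; (ii) for any affine map $\pi:\mathbb{R}^d\to\mathbb{R}^m$, $\operatorname{rdist}(\pi(A),\pi(B))\leq\operatorname{rdist}(A,B)$, with equality if $m=d$ and $\pi$ is invertible; (iii) $\operatorname{rdist}(A,C)\leq\operatorname{rdist}(A,B)+\operatorname{rdist}(B,C)+2\operatorname{rdist}(A,B)\operatorname{rdist}(B,C)$; (iv) for convex sets $A_1,\dots,A_t,B_1,\dots,B_t\subseteq\mathbb{R}^d$ with $A_i\subseteq B_i$ for all $i\in[t]$, $\operatorname{rdist}\big(\operatorname{conv}(\bigcup_{i\in[t]}A_i),\operatorname{conv}(\bigcup_{i\in[t]}B_i)\big)\leq\max_{i\in[t]}\operatorname{rdist}(A_i,B_i)$.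
   Context: For nonempty convex sets $A\subseteq B\subseteq\mathbb{R}^d$, $\operatorname{rdist}(A,B)=\sup_{\pi}\frac{\sup_{b\in B}\inf_{a\in A}|\pi(b)-\pi(a)|}{\sup_{a,a'\in A}|\pi(a)-\pi(a')|}$, the supremum over all linear maps $\pi:\mathbb{R}^d\to\mathbb{R}$, where a fraction with denominator $\infty$ and the fraction $0/0$ are interpreted as $0$; moreover $\operatorname{rdist}(\emptyset,\emptyset)=0$ and $\operatorname{rdist}(\emptyset,B)=\infty$ for $B\neq\emptyset$. For sets $X,Y$ and scalars $\alpha,\beta$, $\alpha X-\beta Y=\{\alpha x-\beta y: x\in X, y\in Y\}$. *)

From HB Require Import structures.
From mathcomp Require Import all_boot all_order all_algebra.
From mathcomp Require Import all_classical all_reals all_analysis.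
Set Implicit Arguments. Unset Strict Implicit. Unset Printing Implicit Defensive.
Import Order.TTheory GRing.Theory Num.Theory.
Local Open Scope classical_set_scope.
Local Open Scope ring_scope.

Section Defs.
Variable R : realType.

Definition cvx {d : nat} (A : set 'rV[R]_d) : Prop :=
  convex_set (A : set (convex_lmodType 'rV[R]_d)).

Definition chull {d : nat} (X : set 'rV[R]_d) : set 'rV[R]_d :=
  \bigcap_(K in [set K : set 'rV[R]_d | cvx K /\ X `<=` K]) K.

Definition is_linear_map (U V : lmodType R) (f : U -> V) : Prop :=
  forall (a : R) (x y : U), f (a *: x + y) = a *: f x + f y.

Definition is_affine_map {d m : nat} (f : 'rV[R]_d -> 'rV[R]_m) : Prop :=
  exists b : 'rV[R]_m, is_linear_map (fun x : 'rV[R]_d => f x - b).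

Definition rd_num {d : nat} (pi : 'rV[R]_d -> R^o) (A B : set 'rV[R]_d) : \bar R :=
  ereal_sup [set ereal_inf [set (`|pi b - pi a|)%:E | a in A] | b in B].

Definition rd_den {d : nat} (pi : 'rV[R]_d -> R^o) (A : set 'rV[R]_d) : \bar R :=
  ereal_sup [set (`|pi a - pi a'|)%:E | a in A & a' in A].

(* fraction N / D with conventions  N/oo = 0,  0/0 = 0 (and N/0 = +oo for N > 0) *)
Definition rd_frac (N D : \bar R) : \bar R :=
  if D == +oo%E then 0%E
  else if D == 0%E then (if N == 0%E then 0%E else +oo%E)
  else (N * ((fine D)^-1)%:E)%E.

Definition rdist {d : nat} (A B : set 'rV[R]_d) : \bar R :=
  if asbool (A = set0) then (if asbool (B = set0) then 0%E else +oo%E)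
  else ereal_sup [set rd_frac (rd_num pi A B) (rd_den pi A)
                 | pi in [set pi : 'rV[R]_d -> R^o | is_linear_map pi]].

Definition mink {d : nat} (alpha beta : R) (X Y : set 'rV[R]_d) : set 'rV[R]_d :=
  [set alpha *: x - beta *: y | x in X & y in Y].

End Defs.

(* The key fact is a separation theorem: a point [b] outside a convex set [S]
   of R^d is separated from it by a linear functional that is strictly smaller
   than its value at [b] somewhere on [S]; it is proved for convex cones by
   induction on the dimension, with no closedness assumption.  Applied to
   [S = (1 + l) A - l A], it shows that if [B] is not contained in [S], the
   separating functional [phi] satisfies [l |phi a1 - phi a2| <= phi b - phi a]
   on [A], so its ratio is at least [l]; conversely [b = (1 + l) a1 - l a2]
   gives [|phi b - phi a1| = l |phi a1 - phi a2|].  This is (i).  (ii) holds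
   because a linear functional composed with an affine map is linear up to a
   constant, and (iii) and (iv) follow from (i) because the sets
   [(1 + l) A - l A] are convex and compose. *)

From HB Require Import structures.
From mathcomp Require Import all_boot all_order all_algebra.
From mathcomp Require Import all_classical all_reals all_analysis.
From mathcomp Require Import lra ring.
Import Order.TTheory GRing.Theory Num.Theory.
Local Open Scope classical_set_scope.
Local Open Scope ring_scope.

Section LinearMaps.
Context {R : realType} {U V : lmodType R}.

Lemma linear_map0 {f : U -> V} : is_linear_map f -> f 0 = 0.
Proof.
move=> hf; apply: (addIr (f 0)); rewrite add0r.
by have := hf 1 0 0; rewrite !scale1r addr0 => <-.
Qed.

Lemma linear_mapD {f : U -> V} : is_linear_map f -> {morph f : x y / x + y}.
Proof. by move=> hf x y; rewrite -[x in LHS]scale1r hf scale1r. Qed.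

Lemma linear_mapZ {f : U -> V} a : is_linear_map f -> {morph f : x / a *: x}.
Proof. by move=> hf x; rewrite -[a *: x]addr0 hf (linear_map0 hf) addr0. Qed.

Lemma linear_mapB {f : U -> V} : is_linear_map f -> {morph f : x y / x - y}.
Proof.
by move=> hf x y; rewrite (linear_mapD hf) -scaleN1r (linear_mapZ _ hf) scaleN1r.
Qed.

Lemma is_linear_map_cst0 : is_linear_map (fun _ : U => 0 : V).
Proof. by move=> a x y; rewrite scaler0 addr0. Qed.

End LinearMaps.

Lemma linear_functionalZ {R : realType} {U : lmodType R} {f : U -> R^o} a :
  is_linear_map f -> {morph f : x / a *: x >-> a * x}.
Proof. exact: linear_mapZ. Qed.

(* [f] separates [K] from the origin, and [K] does not lie in the hyperplane
   [f = 0] (unless [K] is empty). *)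
Definition properly_separates {R : realType} {T : Type} (f : T -> R) (K : set T) :=
  (forall x, K x -> 0 <= f x) /\ (forall x, K x -> exists2 z, K z & 0 < f z).

Section ConeSeparationStep.
Context {R : realType} {V : lmodType R}.
Context {K : set (R * V)} {g : V -> R^o}.
Hypothesis K_add : forall t t' y y', K (t, y) -> K (t', y') -> K (t + t', y + y').
Hypothesis K_scale : forall s t y, 0 < s -> K (t, y) -> K (s * t, s *: y).
Hypotheses (g_lin : is_linear_map g) (g_sep : properly_separates g [set y | K (0, y)]).

Let K_neg {t y} : K (t, y) -> t < 0 -> K (-1, (- t)^-1 *: y).
Proof.
move=> Kty t0; have -> : -1 = (- t)^-1 * t by rewrite invrN mulNr mulVf ?lt_eqF.
by apply: K_scale Kty; rewrite invr_gt0 oppr_gt0.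
Qed.

Let K_pos {t y} : K (t, y) -> 0 < t -> K (1, t^-1 *: y).
Proof.
move=> Kty t0; have -> : 1 = t^-1 * t by rewrite mulVf ?gt_eqF.
by apply: K_scale Kty; rewrite invr_gt0.
Qed.

(* [c] is the supremum of [- g u] over [(1, u)] in [K]; it is at most [g w]
   for [(-1, w)] in [K] because [(0, w + u)] is in [K]. *)
Let two_sided_step {w0 u0} : K (-1, w0) -> K (1, u0) ->
  exists c : R, properly_separates (fun p : R * V => c * p.1 + g p.2) K.
Proof.
move=> Kw0 Ku0.
have K_slice w u : K (-1, w) -> K (1, u) -> K (0, w + u).
  by move=> Kw Ku; rewrite -(addNr (1 : R)); exact: K_add Kw Ku.
pose S := [set - g u | u in [set u | K (1, u)]].
have S_ub w : K (-1, w) -> ubound S (g w).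
  move=> Kw _ [u Ku <-]; have := g_sep.1 _ (K_slice _ _ Kw Ku).
  rewrite /= linear_mapD //; lra.
have S_ne : S !=set0 by exists (- g u0), u0.
exists (sup S); split=> [[t y] /= Kty|_ _].
- case: (ltgtP t 0) Kty => [t0|t0|->] Kty; last by rewrite mulr0 add0r; exact: g_sep.1.
  + have := ge_sup S_ne (S_ub _ (K_neg Kty t0)).
    rewrite linear_functionalZ // mulrC ler_pdivlMr ?oppr_gt0 //; lra.
  + have := ub_le_sup (ex_intro _ _ (S_ub _ Kw0)) (ex_intro2 _ _ _ (K_pos Kty t0) erefl).
    rewrite linear_functionalZ // mulrC -mulNr ler_pdivrMr //; lra.
- have [z Kz gz] := g_sep.2 _ (K_slice _ _ Kw0 Ku0).
  by exists (0, z) => //=; rewrite mulr0 add0r.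
Qed.

Lemma cone_separation_step : exists (c : R) (h : V -> R^o),
  is_linear_map h /\ properly_separates (fun p : R * V => c * p.1 + h p.2) K.
Proof.
have [[w0 Kw0]|noW] := pselect (exists w, K (-1, w));
have [[u0 Ku0]|noU] := pselect (exists u, K (1, u)).
- by have [c ?] := two_sided_step Kw0 Ku0; exists c, g.
- exists (-1), (fun _ => 0); split; first exact: is_linear_map_cst0.
  split=> [[t y] Kty|_ _]; last by exists (-1, w0); rewrite //= addr0 mulN1r ltrN2.
  rewrite /= addr0 mulN1r oppr_ge0 leNgt; apply/negP => t0.
  by apply: noU; exists (t^-1 *: y); exact: K_pos.
- exists 1, (fun _ => 0); split; first exact: is_linear_map_cst0.
  split=> [[t y] Kty|_ _]; last by exists (1, u0); rewrite //= addr0 mul1r.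
  rewrite /= addr0 mul1r leNgt; apply/negP => t0.
  by apply: noW; exists ((- t)^-1 *: y); exact: K_neg.
- have K_slice p : K p -> K (0, p.2).
    case: p => t y Kty; case: (ltgtP t 0) => [tn|tp|<-] //; exfalso.
    + by apply: noW; exists ((- t)^-1 *: y); exact: K_neg.
    + by apply: noU; exists (t^-1 *: y); exact: K_pos.
  exists 0, g; split=> //; split=> p Kp.
    by have := g_sep.1 _ (K_slice _ Kp); rewrite /=; lra.
  have [z Kz gz] := g_sep.2 _ (K_slice _ Kp).
  by exists (0, z) => //=; lra.
Qed.

End ConeSeparationStep.

Section RowCons.
Context {R : realType} {n : nat}.

Definition row_cons (p : R * 'rV[R]_n) : 'rV[R]_(1 + n) := row_mx p.1%:M p.2.

Lemma row_consD t t' y y' :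
  row_cons (t + t', y + y') = row_cons (t, y) + row_cons (t', y').
Proof. by rewrite /row_cons add_row_mx raddfD. Qed.

Lemma row_consZ s t y : row_cons (s * t, s *: y) = s *: row_cons (t, y).
Proof. by rewrite /row_cons scale_row_mx scale_scalar_mx. Qed.

Lemma row_cons0 : row_cons (0, 0) = 0.
Proof. by rewrite /row_cons raddf0 row_mx0. Qed.

Lemma row_consK x : row_cons (lsubmx x 0 0, rsubmx x) = x.
Proof. by rewrite /row_cons -mx11_scalar hsubmxK. Qed.

Lemma row_cons_head p : lsubmx (row_cons p) 0 0 = p.1.
Proof. by rewrite /row_cons row_mxKl mxE eqxx mulr1n. Qed.

Lemma row_cons_tail p : rsubmx (row_cons p) = p.2.
Proof. by rewrite /row_cons row_mxKr. Qed.

End RowCons.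

Lemma cone_separation {R : realType} {n} {K : set 'rV[R]_n} :
  (forall x y, K x -> K y -> K (x + y)) ->
  (forall s x, 0 < s -> K x -> K (s *: x)) -> ~ K 0 ->
  exists f : 'rV[R]_n -> R^o, is_linear_map f /\ properly_separates f K.
Proof.
elim: n K => [|n IH] K K_add K_scale K0.
  exists (fun _ => 0); split; first exact: is_linear_map_cst0.
  by split=> x; rewrite (thinmx0 x).
pose K' := [set p : R * 'rV[R]_n | K (row_cons p)].
have K'_add t t' y y' : K' (t, y) -> K' (t', y') -> K' (t + t', y + y').
  by rewrite /K' /= row_consD; exact: K_add.
have K'_scale s t y : 0 < s -> K' (t, y) -> K' (s * t, s *: y).
  by rewrite /K' /= row_consZ; exact: K_scale.
have [g [g_lin g_sep]] : exists g : 'rV[R]_n -> R^o,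
    is_linear_map g /\ properly_separates g [set y | K' (0, y)].
  apply: IH => [y y' Ky Ky'|s y s0 Ky|]; rewrite /=.
  - by have := K'_add _ _ _ _ Ky Ky'; rewrite addr0.
  - by have := K'_scale _ _ _ s0 Ky; rewrite mulr0.
  - by rewrite /K' /= row_cons0.
have [c [h [h_lin [h_ge0 h_gt0]]]] := cone_separation_step K'_add K'_scale g_lin g_sep.
exists (fun x : 'rV[R]_(1 + n) => c * lsubmx x 0 0 + h (rsubmx x)); split.
  move=> a x y /=; rewrite !mxE [rsubmx _]linearP (linear_mapD h_lin).
  by rewrite (linear_functionalZ _ h_lin) -[a *: (_ + _)]/(a * _); ring.
have K'_split (x : 'rV[R]_(1 + n)) : K x -> K' (lsubmx x 0 0, rsubmx x).
  by rewrite /K' /= row_consK.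
split=> x Kx; first exact: h_ge0 _ (K'_split _ Kx).
have [q K'q hq] := h_gt0 _ (K'_split _ Kx).
by exists (row_cons q); rewrite // row_cons_head row_cons_tail.
Qed.

Section Convexity.
Context {R : realType} {d : nat}.
Implicit Types (A S : set 'rV[R]_d) (b : 'rV[R]_d).

Lemma cvxP A : cvx A <->
  (forall x y t, 0 <= t -> t <= 1 -> A x -> A y -> A (t *: x + (1 - t) *: y)).
Proof.
split=> [A_cvx x y t t0 t1 Ax Ay|A_cvx x y l].
  have tP : Itv.spec (@Itv.num_sem R) (Itv.Real `[0, 1]%Z) t.
    by rewrite /= /Itv.num_sem /= in_itv /= t0 t1 andbT num_real.
  have := A_cvx x y (@Itv.Def R (@Itv.num_sem R) (Itv.Real `[0, 1]%Z) t tP).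
  by rewrite !in_setE => /(_ Ax Ay).
by rewrite !in_setE => Ax Ay; exact: (A_cvx x y l%:num (ge0 l) (le1 l) Ax Ay).
Qed.

Lemma convex_point_separation {S b} : cvx S -> ~ S b ->
  exists f : 'rV[R]_d -> R^o,
    is_linear_map f /\ properly_separates (fun s => f b - f s) S.
Proof.
move=> /cvxP S_cvx Sb.
pose K := [set t *: (b - s) | t in [set t : R | 0 < t] & s in S].
have K_add x y : K x -> K y -> K (x + y).
  move=> [t1 t10 [s1 Ss1 <-]] [t2 t20 [s2 Ss2 <-]].
  have t12 : 0 < t1 + t2 by exact: addr_gt0.
  pose l := t1 / (t1 + t2).
  exists (t1 + t2) => //; exists (l *: s1 + (1 - l) *: s2).
    apply: S_cvx => //; first by rewrite divr_ge0 ?ltW.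
    by rewrite ler_pdivrMr // mul1r lerDl ltW.
  by apply/rowP => i; rewrite !mxE /l; field; rewrite gt_eqF.
have K_scale s x : 0 < s -> K x -> K (s *: x).
  move=> s0 [t t0 [s' Ss' <-]]; exists (s * t); first exact: mulr_gt0.
  by exists s' => //; rewrite scalerA.
have K0 : ~ K 0.
  move=> [t t0 [s Ss /eqP]]; rewrite scaler_eq0 gt_eqF //= subr_eq0 => /eqP bs.
  by apply: Sb; rewrite bs.
have K_diff s : S s -> K (b - s).
  by move=> Ss; exists 1; [exact: ltr01 | exists s; rewrite ?scale1r].
have [f [f_lin [f_ge0 f_gt0]]] := cone_separation K_add K_scale K0.
exists f; split=> //; split=> s Ss /=.
  by rewrite -(linear_mapB f_lin); exact: f_ge0 (K_diff _ Ss).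
have [_ [t t0 [s' Ss' <-]] fz] := f_gt0 _ (K_diff s Ss).
exists s' => //; move: fz.
by rewrite (linear_functionalZ _ f_lin) (linear_mapB f_lin) pmulr_rgt0.
Qed.

Lemma sub_chull S : S `<=` chull S.
Proof. by move=> x Sx K [_ SK]; exact: SK. Qed.

Lemma chull_sub S K : cvx K -> S `<=` K -> chull S `<=` K.
Proof. by move=> K_cvx SK x; apply. Qed.

Lemma cvx_chull S : cvx (chull S).
Proof.
apply/cvxP => x y t t0 t1 Sx Sy K [K_cvx SK].
have KS := conj K_cvx SK.
by have /cvxP := K_cvx; apply=> //; [exact: Sx K KS | exact: Sy K KS].
Qed.

End Convexity.

Lemma lee_of_gt_fin {R : realType} (y z : \bar R) :
  (forall x : R, (y < x%:E)%E -> (z <= x%:E)%E) -> (z <= y)%E.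
Proof.
case: y => [r| |] zle.
- by apply/lee_addgt0Pr => e e0; rewrite -EFinD; apply: zle; rewrite lte_fin; lra.
- exact: leey.
case: z zle => [r'| |] zle //; last by have := zle 0 (ltNyr _).
by have := zle (r' - 1)%R (ltNyr _); rewrite lee_fin => ?; exfalso; lra.
Qed.

Section Ratio.
Context {R : realType}.

Lemma rd_frac0 (N : \bar R) : rd_frac N 0 = if N == 0%E then 0%E else +oo%E.
Proof. by rewrite /rd_frac eqxx. Qed.

Lemma rd_frac_le (N D : \bar R) (l : R) : 0 <= l -> (0 <= N)%E -> (0 <= D)%E ->
  (N <= l%:E * D)%E -> (rd_frac N D <= l%:E)%E.
Proof.
move=> l0 N0 D0 NlD; rewrite /rd_frac.
case: ifP => [_|/negbT Dy]; first by rewrite lee_fin.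
case: ifP => [/eqP D0'|/negbT Dn0].
  have -> : N = 0%E by apply/le_anti; rewrite N0 andbT; move: NlD; rewrite D0' mule0.
  by rewrite eqxx lee_fin.
case: D D0 Dy Dn0 NlD => [D| |] //= D0 _ Dn0 NlD.
have D0' : 0 < D by rewrite lt_def -lee_fin D0 andbT; apply: contraNneq Dn0 => ->.
apply: le_trans (lee_wpmul2r _ NlD) _; first by rewrite lee_fin invr_ge0 ltW.
by rewrite -EFinM mulrK ?unitfE ?gt_eqF.
Qed.

Lemma rd_frac_ge (N : \bar R) (D l : R) : 0 <= D -> ((l * D)%:E <= N)%E ->
  (0 < N)%E -> (l%:E <= rd_frac N D%:E)%E.
Proof.
move=> D0 lDN N0; have [->|Dn0] := eqVneq D 0; first by rewrite rd_frac0 gt_eqF ?leey.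
have D0' : 0 < D by rewrite lt_def Dn0.
rewrite /rd_frac /= eqe (negbTE Dn0).
apply: le_trans (lee_wpmul2r _ lDN); last by rewrite lee_fin invr_ge0.
by rewrite -EFinM mulrK ?unitfE.
Qed.

End Ratio.

Section RelativeDistance.
Context {R : realType} {d : nat}.
Implicit Types (A B C : set 'rV[R]_d) (phi : 'rV[R]_d -> R^o).

Lemma rdistE A B : A !=set0 ->
  rdist A B = ereal_sup [set rd_frac (rd_num phi A B) (rd_den phi A)
                        | phi in [set phi : 'rV[R]_d -> R^o | is_linear_map phi]].
Proof. by case=> a Aa; rewrite /rdist asboolF // => A0; rewrite A0 in Aa. Qed.

Lemma rdist00 : rdist (@set0 'rV[R]_d) set0 = 0%E.
Proof. by rewrite /rdist asboolT. Qed.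

Lemma rdist0l B : B !=set0 -> rdist set0 B = +oo%E.
Proof. by case=> b Bb; rewrite /rdist asboolT // asboolF // => B0; rewrite B0 in Bb. Qed.

Lemma rd_den_ge {phi A a a'} : A a -> A a' -> (`|phi a - phi a'|%:E <= rd_den phi A)%E.
Proof. by move=> Aa Aa'; apply: ereal_sup_ubound; exists a => //; exists a'. Qed.

Lemma rd_den_le {phi A} (x : R) :
  (forall a a', A a -> A a' -> `|phi a - phi a'| <= x) -> (rd_den phi A <= x%:E)%E.
Proof.
by move=> le_x; apply: ge_ereal_sup => _ [a Aa [a' Aa' <-]]; rewrite lee_fin le_x.
Qed.

Lemma rd_num_ge {phi A B b} {x : R} :
  B b -> (forall a, A a -> x <= `|phi b - phi a|) -> (x%:E <= rd_num phi A B)%E.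
Proof.
move=> Bb ge_x; apply: le_trans (ereal_sup_ubound _); last by exists b.
by apply: le_ereal_inf_tmp => _ [a Aa <-]; rewrite lee_fin ge_x.
Qed.

Lemma rd_den_ge0 {phi A} : A !=set0 -> (0 <= rd_den phi A)%E.
Proof. by case=> a Aa; apply: le_trans (rd_den_ge Aa Aa); rewrite lee_fin. Qed.

Lemma rd_num_ge0 {phi A B} : B !=set0 -> (0 <= rd_num phi A B)%E.
Proof. by case=> b Bb; apply: rd_num_ge Bb _ => a _. Qed.

Lemma rdist_ge_frac B {phi A} : is_linear_map phi -> A !=set0 ->
  (rd_frac (rd_num phi A B) (rd_den phi A) <= rdist A B)%E.
Proof.
by move=> phi_lin A_ne; rewrite rdistE //; apply: ereal_sup_ubound; exists phi.
Qed.

Lemma rdist_ge0 A B : (0 <= rdist A B)%E.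
Proof.
have [->|/set0P A_ne] := eqVneq A set0.
  by have [->|/set0P B_ne] := eqVneq B set0; rewrite ?rdist00 ?rdist0l ?leey.
apply: le_trans (rdist_ge_frac B is_linear_map_cst0 A_ne).
have -> : rd_den (fun _ => 0 : R^o) A = 0%E.
  apply/le_anti; rewrite rd_den_ge0 // andbT.
  by rewrite rd_den_le // => a a' _ _; rewrite subrr normr0.
by rewrite rd_frac0; case: eqP.
Qed.

Lemma rdist_le_of_mink {A B} {l : R} : A `<=` B -> 0 <= l ->
  B `<=` mink (1 + l) l A A -> (rdist A B <= l%:E)%E.
Proof.
move=> AB l0 B_mink; have [A0|/set0P [a0 Aa0]] := eqVneq A set0.
  have -> : B = set0 by apply/seteqP; split=> // b /B_mink [a]; rewrite A0.
  by rewrite A0 rdist00 lee_fin.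
rewrite rdistE; last by exists a0.
apply: ge_ereal_sup => _ [phi phi_lin <-].
apply: rd_frac_le => //; first exact: rd_num_ge0 (ex_intro _ a0 (AB _ Aa0)).
  exact: rd_den_ge0 (ex_intro _ a0 Aa0).
apply: ge_ereal_sup => _ [_ /B_mink [a1 Aa1 [a2 Aa2 <-]] <-].
apply: le_trans (ereal_inf_lbound _) _; first by exists a1.
have -> : phi ((1 + l) *: a1 - l *: a2) - phi a1 = l * (phi a1 - phi a2).
  by rewrite (linear_mapB phi_lin) !(linear_functionalZ _ phi_lin); ring.
rewrite normrM ger0_norm // EFinM; apply: lee_wpmul2l; first by rewrite lee_fin.
exact: rd_den_ge.
Qed.

Lemma mink_cvx (a b : R) {A B} : cvx A -> cvx B -> cvx (mink a b A B).
Proof.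
move=> /cvxP A_cvx /cvxP B_cvx; apply/cvxP => ? ? t t0 t1.
move=> [x1 Ax1 [y1 By1 <-]] [x2 Ax2 [y2 By2 <-]].
exists (t *: x1 + (1 - t) *: x2); first exact: A_cvx.
exists (t *: y1 + (1 - t) *: y2); first exact: B_cvx.
by apply/rowP => i; rewrite !mxE; ring.
Qed.

(* Whichever of [a1], [a] has the larger value gives the bound, through
   [(1 + l) u - l v = u + l (u - v)]. *)
Lemma mink_separation_gap {phi A} {l x : R} : 0 <= l -> is_linear_map phi ->
  (forall a1 a2, A a1 -> A a2 -> phi ((1 + l) *: a1 - l *: a2) <= x) ->
  forall a a1 a2, A a -> A a1 -> A a2 -> l * `|phi a1 - phi a2| <= x - phi a.
Proof.
move=> l0 phi_lin le_x a a1 a2 Aa Aa1 Aa2.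
have {}le_x u v : A u -> A v -> (1 + l) * phi u - l * phi v <= x.
  move=> Au Av; have := le_x _ _ Au Av.
  by rewrite (linear_mapB phi_lin) !(linear_functionalZ _ phi_lin).
wlog le21 : a1 a2 Aa1 Aa2 / phi a2 <= phi a1.
  move=> gap; case/orP: (le_total (phi a2) (phi a1)) => ?; first exact: gap.
  by rewrite distrC; exact: gap.
rewrite ger0_norm ?subr_ge0 //.
have := le_x _ _ Aa1 Aa2; have := le_x _ _ Aa Aa2.
by case: (lerP (phi a) (phi a1)) => ?; nra.
Qed.

Lemma frac_ge_of_separation {phi A B b} {l : R} : is_linear_map phi -> 0 < l -> B b ->
  properly_separates (fun s => phi b - phi s) (mink (1 + l) l A A) -> A !=set0 ->
  (l%:E <= rd_frac (rd_num phi A B) (rd_den phi A))%E.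
Proof.
move=> phi_lin l0 Bb [sep_ge sep_gt] A_ne; have [a0 Aa0] := A_ne.
have mink_in a1 a2 : A a1 -> A a2 -> mink (1 + l) l A A ((1 + l) *: a1 - l *: a2).
  by move=> Aa1 Aa2; exists a1 => //; exists a2.
have le_mink a1 a2 : A a1 -> A a2 -> phi ((1 + l) *: a1 - l *: a2) <= phi b.
  by move=> Aa1 Aa2; rewrite -subr_ge0; exact: sep_ge (mink_in _ _ Aa1 Aa2).
have gap := mink_separation_gap (ltW l0) phi_lin le_mink.
have D_le a : A a -> (rd_den phi A <= ((phi b - phi a) / l)%:E)%E.
  by move=> Aa; apply: rd_den_le => a1 a2 Aa1 Aa2; rewrite ler_pdivlMr // mulrC gap.
have [D DE] : exists D, rd_den phi A = D%:E.
  move: (D_le _ Aa0) (rd_den_ge0 (phi := phi) A_ne).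
  by case: rd_den => [D| |] // _ _; exists D.
have D0 : 0 <= D by rewrite -lee_fin -DE; exact: rd_den_ge0.
have lD_le : ((l * D)%:E <= rd_num phi A B)%E.
  apply: rd_num_ge Bb _ => a Aa; apply: le_trans (ler_norm _).
  by have := D_le _ Aa; rewrite DE lee_fin ler_pdivlMr // mulrC.
rewrite DE; apply: rd_frac_ge => //.
have [DZ|D_neq0] := eqVneq D 0; last first.
  by apply: lt_le_trans lD_le; rewrite lte_fin mulr_gt0 // lt_def D_neq0.
(* [D = 0]: [phi] is constant on [A], so the strictly separated point of the
   Minkowski combination has value [phi a0]. *)
have phi_cst a : A a -> phi a = phi a0.
  move=> Aa; apply/eqP; rewrite -subr_eq0 -normr_le0 -lee_fin -DZ -DE.
  exact: rd_den_ge.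
have [_ [a1 Aa1 [a2 Aa2 <-]]] := sep_gt _ (mink_in _ _ Aa0 Aa0).
rewrite (linear_mapB phi_lin) !(linear_functionalZ _ phi_lin).
rewrite (phi_cst _ Aa1) (phi_cst _ Aa2).
have -> : (1 + l) * phi a0 - l * phi a0 = phi a0 by ring.
move=> gap_pos; apply: (@lt_le_trans _ _ (phi b - phi a0)%:E); first by rewrite lte_fin.
by apply: rd_num_ge Bb _ => a Aa; rewrite (phi_cst _ Aa); exact: ler_norm.
Qed.

Lemma mink_of_rdist_lt {A B} {l : R} : cvx A -> (rdist A B < l%:E)%E ->
  B `<=` mink (1 + l) l A A.
Proof.
move=> A_cvx lt_l b Bb; apply: contrapT => b_notin.
have l0 : 0 < l by rewrite -lte_fin; exact: le_lt_trans (rdist_ge0 A B) lt_l.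
have A_ne : A !=set0.
  apply/set0P/negP => /eqP A0; move: lt_l; rewrite A0 rdist0l ?ltNge ?leey //.
  by exists b.
have [phi [phi_lin phi_sep]] :=
  convex_point_separation (mink_cvx _ _ A_cvx A_cvx) b_notin.
have := frac_ge_of_separation phi_lin l0 Bb phi_sep A_ne.
by move/le_trans/(_ (rdist_ge_frac B phi_lin A_ne)); rewrite leNgt lt_l.
Qed.

Lemma rdist_mink_inf A B : cvx A -> A `<=` B ->
  rdist A B =
    ereal_inf [set l%:E | l in [set l : R | 0 <= l /\ B `<=` mink (1 + l) l A A]].
Proof.
move=> A_cvx AB; apply/le_anti/andP; split.
  by apply: le_ereal_inf_tmp => _ [l [l0 B_mink] <-]; exact: rdist_le_of_mink.
apply: lee_of_gt_fin => x lt_x; apply: ereal_inf_lbound; exists x => //; split.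
  by rewrite -lee_fin (le_trans (rdist_ge0 _ _) (ltW lt_x)).
exact: mink_of_rdist_lt.
Qed.

(* Expanding the two decompositions, a point of [C] is
   [(1 + l1)(1 + l2) a11 + l1 l2 a22 - ((1 + l2) l1 a12 + (1 + l1) l2 a21)];
   the positive weights sum to [1 + l] and the negative ones to [l]. *)
Lemma mink_trans {A B C} {l1 l2 : R} : cvx A -> 0 <= l1 -> 0 <= l2 ->
  B `<=` mink (1 + l1) l1 A A -> C `<=` mink (1 + l2) l2 B B ->
  C `<=` mink (1 + (l1 + l2 + 2 * l1 * l2)) (l1 + l2 + 2 * l1 * l2) A A.
Proof.
move=> /cvxP A_cvx l10 l20 B_mink C_mink c /C_mink.
move=> [b1 /B_mink [a11 A11 [a12 A12 <-]] [b2 /B_mink [a21 A21 [a22 A22 <-]] <-]].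
set l := l1 + l2 + 2 * l1 * l2.
have [l_eq0|l_neq0] := eqVneq l 0.
  have [l1z l2z] : l1 = 0 /\ l2 = 0 by move: l_eq0; rewrite /l => ?; split; nra.
  by exists a11 => //; exists a12 => //; apply/rowP => i; rewrite !mxE /l l1z l2z; ring.
have l_gt0 : 0 < l by rewrite lt_def l_neq0 /l; nra.
pose al := (1 + l1) * (1 + l2) / (1 + l).
pose be := (1 + l2) * l1 / l.
exists (al *: a11 + (1 - al) *: a22).
  apply: A_cvx => //; first by rewrite /al divr_ge0 //; nra.
  by rewrite /al ler_pdivrMr ?mul1r /l; nra.
exists (be *: a12 + (1 - be) *: a21).
  apply: A_cvx => //; first by rewrite /be divr_ge0 //; nra.
  by rewrite /be ler_pdivrMr ?mul1r // /l; nra.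
apply/rowP => i; rewrite !mxE /al /be /l; field.
by rewrite -/l l_neq0 gt_eqF //; nra.
Qed.

Lemma triangle_slack {y1 y2 x : R} : 0 <= y1 -> 0 <= y2 -> y1 + y2 + 2 * y1 * y2 < x ->
  exists2 e, 0 < e & (y1 + e) + (y2 + e) + 2 * (y1 + e) * (y2 + e) <= x.
Proof.
move=> y10 y20 lt_x; set g := x - (y1 + y2 + 2 * y1 * y2).
have g0 : 0 < g by rewrite subr_gt0.
(* For [e <= 1] the increase is at most [e (4 + 2 y1 + 2 y2)]. *)
pose k := 4 + 2 * y1 + 2 * y2; pose e := g / (k + g).
have k0 : 0 < k by rewrite /k; lra.
have ekg : e * (k + g) = g by rewrite /e divfK // gt_eqF // addr_gt0.
have e0 : 0 < e by rewrite /e divr_gt0 // addr_gt0.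
have e1 : e < 1 by nra.
have -> : x = g + (y1 + y2 + 2 * y1 * y2) by rewrite /g; ring.
have ee : e * e <= e by nra.
have eg : 0 <= e * g by rewrite mulr_ge0 ?ltW.
by exists e => //; rewrite /k in ekg; lra.
Qed.

Lemma rdist_triangle A B C : cvx A -> cvx B -> A `<=` B -> B `<=` C ->
  (rdist A C <= rdist A B + rdist B C + 2%:E * rdist A B * rdist B C)%E.
Proof.
move=> A_cvx B_cvx AB BC; apply: lee_of_gt_fin => x lt_x.
have ge0_AB := rdist_ge0 A B; have ge0_BC := rdist_ge0 B C.
have P0 : (0 <= 2%:E * rdist A B * rdist B C)%E by rewrite !mule_ge0.
have lt_AB : (rdist A B < x%:E)%E.
  by apply: le_lt_trans lt_x; apply: le_trans (leeDl _ P0); exact: leeDl.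
have lt_BC : (rdist B C < x%:E)%E.
  by apply: le_lt_trans lt_x; apply: le_trans (leeDl _ P0); exact: leeDr.
have [y1 y1E] : exists y1, rdist A B = y1%:E.
  by move: ge0_AB lt_AB; case: (rdist A B) => [y| |] //; exists y.
have [y2 y2E] : exists y2, rdist B C = y2%:E.
  by move: ge0_BC lt_BC; case: (rdist B C) => [y| |] //; exists y.
have y10 : 0 <= y1 by rewrite -lee_fin -y1E.
have y20 : 0 <= y2 by rewrite -lee_fin -y2E.
move: lt_x; rewrite y1E y2E -!EFinM -!EFinD lte_fin => lt_x.
have [e e0 le_x] := triangle_slack y10 y20 lt_x.
have AB_mink : B `<=` mink (1 + (y1 + e)) (y1 + e) A A.
  by apply: mink_of_rdist_lt A_cvx _; rewrite y1E lte_fin ltrDl.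
have BC_mink : C `<=` mink (1 + (y2 + e)) (y2 + e) B B.
  by apply: mink_of_rdist_lt B_cvx _; rewrite y2E lte_fin ltrDl.
have e1 : 0 <= y1 + e by exact: addr_ge0 y10 (ltW e0).
have e2 : 0 <= y2 + e by exact: addr_ge0 y20 (ltW e0).
have AC : A `<=` C by apply: subset_trans AB BC.
have L0 : 0 <= (y1 + e) + (y2 + e) + 2 * (y1 + e) * (y2 + e) by nra.
have := rdist_le_of_mink AC L0 (mink_trans A_cvx e1 e2 AB_mink BC_mink).
by move/le_trans; apply; rewrite lee_fin.
Qed.

Lemma rdist_chull_bigcup t (As Bs : 'I_t -> set 'rV[R]_d) : (0 < t)%N ->
  (forall i, cvx (As i)) -> (forall i, As i `<=` Bs i) ->
  (rdist (chull (\bigcup_(i in [set: 'I_t]) As i))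
         (chull (\bigcup_(i in [set: 'I_t]) Bs i))
   <= \big[maxe/-oo%E]_(i < t) rdist (As i) (Bs i))%E.
Proof.
move=> t0 As_cvx AsBs; set A := chull _; set B := chull _.
apply: lee_of_gt_fin => x lt_x.
have lt_i i : (rdist (As i) (Bs i) < x%:E)%E by apply: le_lt_trans lt_x; exact: le_bigmax.
have x0 : 0 <= x.
  by rewrite -lee_fin; apply: ltW (le_lt_trans (rdist_ge0 _ _) (lt_i (Ordinal t0))).
have AB : A `<=` B.
  apply: chull_sub; first exact: cvx_chull.
  by move=> a [i _ Aia]; apply: sub_chull; exists i => //; exact: AsBs.
apply: rdist_le_of_mink AB x0 _.
apply: chull_sub; first exact: mink_cvx (cvx_chull _) (cvx_chull _).
move=> b [i _ /(mink_of_rdist_lt (As_cvx i) (lt_i i)) [a1 Aa1 [a2 Aa2 <-]]].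
by exists a1; [apply: sub_chull; exists i | exists a2 => //; apply: sub_chull; exists i].
Qed.

End RelativeDistance.

Section AffineImage.
Context {R : realType} {d m : nat}.
Implicit Types (A B : set 'rV[R]_d) (f : 'rV[R]_d -> 'rV[R]_m).

Lemma rd_num_image f (phi : 'rV[R]_m -> R^o) A B :
  rd_num phi (f @` A) (f @` B) = rd_num (phi \o f) A B.
Proof.
rewrite /rd_num image_comp; congr ereal_sup; congr image; apply: funext => b /=.
by rewrite image_comp.
Qed.

Lemma rd_den_image f (phi : 'rV[R]_m -> R^o) A :
  rd_den phi (f @` A) = rd_den (phi \o f) A.
Proof.
rewrite /rd_den; congr ereal_sup; apply/seteqP; split.
  by move=> _ [_ [a Aa <-] [_ [a' Aa' <-] <-]]; exists a => //; exists a'.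
by move=> _ [a Aa [a' Aa' <-]]; exists (f a); [exists a | exists (f a'); first exists a'].
Qed.

Lemma eq_rd_num {phi psi : 'rV[R]_d -> R^o} {A B} :
  (forall x y, `|phi x - phi y| = `|psi x - psi y|) -> rd_num phi A B = rd_num psi A B.
Proof.
move=> eq_dist; rewrite /rd_num; congr ereal_sup; congr image; apply: funext => b.
by congr ereal_inf; congr image; apply: funext => a; rewrite eq_dist.
Qed.

Lemma eq_rd_den {phi psi : 'rV[R]_d -> R^o} {A} :
  (forall x y, `|phi x - phi y| = `|psi x - psi y|) -> rd_den phi A = rd_den psi A.
Proof.
move=> eq_dist; rewrite /rd_den; congr ereal_sup; congr image2.
by apply: funext => a; apply: funext => a'; rewrite eq_dist.
Qed.

Lemma rdist_image_affine_le {f A B} : is_affine_map f ->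
  (rdist (f @` A) (f @` B) <= rdist A B)%E.
Proof.
move=> [c f_lin]; have [A0|/set0P [a Aa]] := eqVneq A set0.
  rewrite A0 image_set0; have [B0|/set0P [b Bb]] := eqVneq B set0.
    by rewrite B0 image_set0 !rdist00.
  rewrite rdist0l; last by exists (f b), b.
  by rewrite rdist0l //; exists b.
rewrite rdistE; last by exists (f a), a.
apply: ge_ereal_sup => _ [phi phi_lin <-].
rewrite rd_num_image rd_den_image.
(* [phi \o f] is linear up to the constant [phi c], which cancels in differences. *)
pose psi x := phi (f x - c) : R^o.
have dist_psi x y : `|(phi \o f) x - (phi \o f) y| = `|psi x - psi y|.
  by rewrite /psi /= -!(linear_mapB phi_lin) opprB addrA subrK.
rewrite (eq_rd_num dist_psi) (eq_rd_den dist_psi) rdistE; last by exists a.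
by apply: ereal_sup_ubound; exists psi => // k x y; rewrite /psi f_lin phi_lin.
Qed.

Lemma is_affine_map_inv {f} {g : 'rV[R]_m -> 'rV[R]_d} :
  is_affine_map f -> cancel f g -> cancel g f -> is_affine_map g.
Proof.
move=> [c f_lin] fK gK; exists (g 0).
pose L x := f x - c; have L_lin : is_linear_map L := f_lin.
have L_inj : injective L by move=> x y /addIr; apply: (can_inj fK).
have LgK z : L (g z - g 0) = z.
  by rewrite (linear_mapB L_lin) /L !gK opprB addrA subrK subr0.
by move=> k x y; apply: L_inj; rewrite LgK L_lin !LgK.
Qed.

End AffineImage.

Lemma rdist_image_affine_bij {R : realType} {d m : nat} (f : 'rV[R]_d -> 'rV[R]_m) A B :
  is_affine_map f -> bijective f -> rdist (f @` A) (f @` B) = rdist A B.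
Proof.
move=> f_aff [g fK gK]; apply/le_anti; rewrite rdist_image_affine_le //=.
have gf : g \o f = id by apply/funext => x; exact: fK.
have := rdist_image_affine_le (A := f @` A) (B := f @` B) (is_affine_map_inv f_aff fK gK).
by rewrite !image_comp gf !image_id.
Qed.

Theorem mainTheorem4 (R : realType) (d : nat) (A B C : set 'rV[R]_d) :
  cvx A -> cvx B -> cvx C -> A `<=` B -> B `<=` C ->
  (* (i) *)
  rdist A B = ereal_inf [set l%:E | l in [set l : R | 0 <= l /\ B `<=` mink (1 + l) l A A]]
  (* (ii) *)
  /\ (forall (m : nat) (pi : 'rV[R]_d -> 'rV[R]_m), is_affine_map pi ->
        (rdist (pi @` A) (pi @` B) <= rdist A B)%E)
  /\ (forall pi : 'rV[R]_d -> 'rV[R]_d, is_affine_map pi -> bijective pi ->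
        rdist (pi @` A) (pi @` B) = rdist A B)
  (* (iii) *)
  /\ (rdist A C <= rdist A B + rdist B C + 2%:E * rdist A B * rdist B C)%E
  (* (iv) *)
  /\ (forall (t : nat) (As Bs : 'I_t -> set 'rV[R]_d),
        (0 < t)%N ->
        (forall i, cvx (As i)) -> (forall i, cvx (Bs i)) ->
        (forall i, As i `<=` Bs i) ->
        (rdist (chull (\bigcup_(i in [set: 'I_t]) As i))
               (chull (\bigcup_(i in [set: 'I_t]) Bs i))
         <= \big[maxe/-oo%E]_(i < t) rdist (As i) (Bs i))%E).
Proof.
move=> A_cvx B_cvx _ AB BC; split; first exact: rdist_mink_inf.
split; first by move=> m f; exact: rdist_image_affine_le.
split; first by move=> f; exact: rdist_image_affine_bij.
split; first exact: rdist_triangle.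
by move=> t As Bs t0 As_cvx _; exact: rdist_chull_bigcup.
Qed.
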